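(* Let $\Lambda\Subset\mathbb X$ and suppose $\rho:\mathbf F\to\mathbb C$ satisfies \[ \rho(\{s\}\cup T)=\sum_{N\subset\Lambda\setminus T}z(s)\,\gamma(s,N\mid T)\,\rho(T\cup N) \] for all $s\in\mathbb X$ and $T\Subset\mathbb X\setminus\{s\}$. Then there exists $c\in\mathbb C$ such that $\rho(X)=Z(X,\Lambda)\,c$ for all $X\Subset\mathbb X$. In particular, if $\rho(\varnothing)\neq0$, then $Z(\Lambda)\neq0$ and $R(X,\Lambda)=\rho(X)/\rho(\varnothing)$ for all $X\Subset\mathbb X$.
   Context: $\mathbb X$ is a finite or countably infinite set, $X\Subset\mathbb X$ means finite subset, $\mathbf F$ is the set of finite subsets. Fix $z:\mathbb X\to\mathbb C$, $W:\mathbf F\to\mathbb C$; $z^X=\prod_{y\in X}z(y)$. Conditional interaction: $W(X\mid B)=\prod_{C\subset B}W(X\cup C)$ if $X\cap B=\varnothing$, $W(X\mid B)=0$ if $X=\{y\}$ with $y\in B$, $W(X\mid B)=1$ otherwise. Boltzmann factor $\kappa(X\mid B)=\prod_{\varnothing\neq S\subset X}W(S\mid B)$, $\kappa(X)=\kappa(X\mid\varnothing)$, and $\kappa(s\mid B)=\kappa(\{s\}\mid B)$. Kernel: $\gamma(s,N\mid B)=\sum_{M\subset N}(-1)^{|N\setminus M|}\kappa(s\mid B\cup M)$ for $s\in\mathbb X$, $N,B\in\mathbf F$. Partition functions $Z(X,\Lambda)=\sum_{Y\subset\Lambda\setminus X}z^{X\cup Y}\kappa(X\cup Y)$, $Z(\Lambda)=Z(\varnothing,\Lambda)$;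 correlations $R(X,\Lambda)=Z(X,\Lambda)/Z(\Lambda)$ when $Z(\Lambda)\neq0$ (defined for all $X\Subset\mathbb X$, not only $X\subset\Lambda$). *)

From HB Require Import structures.
From mathcomp Require Import all_boot all_order all_algebra.
From mathcomp Require Import finmap.
From mathcomp Require Import reals.
From mathcomp Require Import complex.
Set Implicit Arguments. Unset Strict Implicit. Unset Printing Implicit Defensive.
Import Order.TTheory GRing.Theory Num.Theory.
Local Open Scope ring_scope.
Local Open Scope fset_scope.

Section Defs.
Variables (R : realType) (X : countType).
Notation C := (complex R).
Variables (z : X -> C) (W : {fset X} -> C).

Definition zpow (A : {fset X}) : C := \prod_(y <- A) z y.

Definition Wcond (A B : {fset X}) : C :=
  if A `&` B == fset0 then \prod_(D <- fpowerset B) W (A `|` D)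
  else if [exists y : A, (A == [fset val y]) && (val y \in B)] then 0
  else 1.

Definition kappa (A B : {fset X}) : C :=
  \prod_(S <- fpowerset A | S != fset0) Wcond S B.

Definition kappa1 (s : X) (B : {fset X}) : C := kappa [fset s] B.

Definition gamma (s : X) (N B : {fset X}) : C :=
  \sum_(M <- fpowerset N) (-1) ^+ #|` N `\` M| * kappa1 s (B `|` M).

Definition Zpart (A L : {fset X}) : C :=
  \sum_(Y <- fpowerset (L `\` A)) zpow (A `|` Y) * kappa (A `|` Y) fset0.

Definition Z0 (L : {fset X}) : C := Zpart fset0 L.

Definition corr (A L : {fset X}) : C := Zpart A L / Z0 L.
End Defs.

(* Let phi be the Moebius transform of rho relative to Lambda,
   phi(U) = sum_{Y <= Lambda \ U} (-1)^|Y| rho(U u Y), so that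
   rho(X) = sum_{Y <= Lambda \ X} phi(X u Y).  Substituting this into the
   equation for rho, exchanging the sums and inverting once more turns the
   equation into the one-point recursion phi(s u T) = z(s) kappa(s | T) phi(T):
   the terms in which s is added to T drop out because kappa(s | B) = 0 for
   s in B.  As kappa(s u T) = kappa(s | T) kappa(T), iterating the recursion
   gives phi(U) = z^U kappa(U) phi({}), hence rho(X) = Z(X, Lambda) phi({}). *)
From HB Require Import structures.
From mathcomp Require Import all_boot all_order all_algebra.
From mathcomp Require Import finmap reals complex.
Import GRing.Theory Num.Theory.
Local Open Scope ring_scope.
Local Open Scope fset_scope.

Section FpowersetBig.
Context {K : choiceType}.
Implicit Types (a : K) (A M N Y : {fset K}).

Lemma fset_ind (P : {fset K} -> Prop) :
  P fset0 -> (forall a A, a \notin A -> P A -> P (a |` A)) -> forall A, P A.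
Proof.
move=> P0 PU1 A; have [n] := ubnP #|`A|; elim: n A => // n IHn A.
have [->//|[a aA] ltAn] := fset_0Vmem A.
rewrite -(fsetD1K aA); apply: PU1; first by rewrite !inE eqxx.
by apply: IHn; rewrite (cardfsD1 a) aA in ltAn.
Qed.

Lemma notin_fpowerset {a A M} : a \notin A -> M \in fpowerset A -> a \notin M.
Proof. by rewrite fpowersetE => aA /fsubsetP MA; apply: contra aA => /MA. Qed.

Lemma fset1_neq0 a : [fset a] != fset0.
Proof. by apply/fset0Pn; exists a; rewrite fset11. Qed.

Lemma fsetU1_neq0 a A : a |` A != fset0.
Proof. by apply/fset0Pn; exists a; rewrite fsetU11. Qed.

Lemma fsetU1Dl a A Y : a \notin Y -> (a |` A) `\` Y = a |` (A `\` Y).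
Proof.
move=> aY; apply/fsetP => x; rewrite !inE.
by have [->|] := eqVneq x a; rewrite ?(negbTE aY).
Qed.

Lemma fsetU1DU1 a A Y : a \notin A -> (a |` A) `\` (a |` Y) = A `\` Y.
Proof.
move=> aA; apply/fsetP => x; rewrite !inE.
by have [->|] := eqVneq x a; rewrite ?(negbTE aA) ?andbF.
Qed.

Lemma fsetUKD {A Y M} : M \in fpowerset (A `\` Y) -> (Y `|` M) `\` Y = M.
Proof.
rewrite fpowersetCE => /andP[_ disjMY].
by rewrite fsetDUl fsetDv fset0U; apply/fsetDidPl.
Qed.

Lemma big_fpowersetU1 (T : Type) (idx : T) (op : Monoid.com_law idx)
    a A (F : {fset K} -> T) : a \notin A ->
  \big[op/idx]_(S <- fpowerset (a |` A)) F S =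
  op (\big[op/idx]_(S <- fpowerset A) F S)
     (\big[op/idx]_(S <- fpowerset A) F (a |` S)).
Proof.
move=> aA; rewrite (big_fsetID _ [pred S : {fset K} | a \notin S]).
congr (op _ _).
  apply: eq_fbigl => S; rewrite !inE /= !fpowersetE.
  apply/andP/idP => [[/fsubsetP SaA aS]|SA].
    by apply/fsubsetP => x xS; move: (SaA x xS); rewrite !inE => /predU1P[xa|//];
      rewrite -xa xS in aS.
  by split; [exact: fsubset_trans SA (fsubsetU1 _ _) | apply: contra aA => /(fsubsetP SA)].
have -> : [fset S in fpowerset (a |` A) | ~~ [pred S : {fset K} | a \notin S] S]
    = [fset a |` S | S in fpowerset A].
  apply/fsetP => S; rewrite !inE /=; apply/andP/imfsetP => [[SaA aS]|[S' S'A ->]].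
    exists (S `\ a); last by rewrite fsetD1K // -(negbK (a \in S)).
    by rewrite /= fpowersetE -(fsetU1K aA) fsetSD // -fpowersetE.
  by rewrite fpowersetE fsetU11 fsetUS // -fpowersetE.
rewrite big_imfset /=; last first.
  move=> S1 S2 S1A S2A eqS.
  by rewrite -(fsetU1K (notin_fpowerset aA S1A)) -(fsetU1K (notin_fpowerset aA S2A)) eqS.
by apply: perm_big; apply: uniq_perm; rewrite ?fset_uniq.
Qed.

Lemma exchange_big_fpowerset {V : nmodType} A (F : {fset K} -> {fset K} -> V) :
  \sum_(N <- fpowerset A) \sum_(M <- fpowerset N) F M N =
  \sum_(M <- fpowerset A) \sum_(Y <- fpowerset (A `\` M)) F M (M `|` Y).
Proof.
elim/fset_ind: A F => [|a A aA IHA] F.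
  by rewrite fpowerset0 !big_seq_fset1 fsetD0 fpowerset0 !big_seq_fset1 fset0U.
rewrite !big_fpowersetU1 //= [X in (_ + X)%R]big_seq.
under [X in (_ + X)%R]eq_bigr => N NA do rewrite big_fpowersetU1 ?(notin_fpowerset aA NA) //.
rewrite -big_seq big_split /= !IHA [X in _ = (X + _)%R]big_seq [X in _ = (_ + X)%R]big_seq.
under eq_bigr => M MA do rewrite fsetU1Dl ?(notin_fpowerset aA MA) // big_fpowersetU1
  ?inE ?(notin_fpowerset aA MA) //.
under [X in _ = (_ + X)%R]eq_bigr => M _ do rewrite fsetU1DU1 //.
rewrite big_split /= -!big_seq addrA; congr (_ + _ + _)%R.
  by apply: eq_bigr => M _; apply: eq_bigr => Y _; rewrite fsetUCA.
by apply: eq_bigr => M _; apply: eq_bigr => Y _; rewrite fsetUA.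
Qed.

Section Sums.
Context {V : pzRingType}.

Lemma sum_fpowerset_sign N :
  \sum_(Y <- fpowerset N) (-1) ^+ #|`Y| = (N == fset0)%:R :> V.
Proof.
elim/fset_ind: N => [|a A aA _]; first by rewrite fpowerset0 big_seq_fset1 eqxx.
rewrite big_fpowersetU1 //= big_seq [X in (_ + X)%R]big_seq -big_split /=.
rewrite (negbTE (fsetU1_neq0 _ _)); apply: big1 => S SA.
by rewrite cardfsU1 (notin_fpowerset aA SA) exprS mulN1r addrN.
Qed.

Lemma sum_fpowerset_signD N :
  \sum_(Y <- fpowerset N) (-1) ^+ #|`N `\` Y| = (N == fset0)%:R :> V.
Proof.
elim/fset_ind: N => [|a A aA _].
  by rewrite fpowerset0 big_seq_fset1 eqxx fsetD0 cardfs0.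
rewrite big_fpowersetU1 //= big_seq [X in (_ + X)%R]big_seq -big_split /=.
rewrite (negbTE (fsetU1_neq0 _ _)); apply: big1 => S SA.
have aAS : a \notin A `\` S by rewrite !inE (negbTE aA) andbF.
rewrite fsetU1Dl ?(notin_fpowerset aA SA) // fsetU1DU1 //.
by rewrite cardfsU1 aAS exprS mulN1r addNr.
Qed.

Lemma sum_fpowerset_eq0 A (g : {fset K} -> V) :
  \sum_(N <- fpowerset A) (N == fset0)%:R * g N = g fset0.
Proof.
rewrite (big_fsetD1 fset0) /=; last by rewrite fpowersetE fsub0set.
rewrite mul1r big1_fset ?addr0 // => N.
by rewrite !inE => /andP[/negbTE -> _] _; rewrite mul0r.
Qed.

Lemma moebius_fpowerset A (g : {fset K} -> V) :
  \sum_(Y <- fpowerset A) (-1) ^+ #|`Y| * \sum_(M <- fpowerset (A `\` Y)) g (Y `|` M)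
  = g fset0.
Proof.
under eq_bigr => Y _ do rewrite big_distrr /=.
rewrite -(exchange_big_fpowerset A (fun M N => (-1) ^+ #|`M| * g N)).
under eq_bigr => N _ do rewrite -big_distrl /= sum_fpowerset_sign.
exact: sum_fpowerset_eq0.
Qed.

Definition moebius (L : {fset K}) (rho : {fset K} -> V) (U : {fset K}) : V :=
  \sum_(Y <- fpowerset (L `\` U)) (-1) ^+ #|`Y| * rho (U `|` Y).

Lemma sum_moebius L rho A :
  \sum_(Y <- fpowerset (L `\` A)) moebius L rho (A `|` Y) = rho A.
Proof.
rewrite /moebius.
under eq_bigr => Y _ do rewrite -fsetDDl big_seq.
under eq_bigr => Y _ do under eq_bigr => Y' Y'LA do
  rewrite -{1}(fsetUKD Y'LA) -(fsetUA A Y Y').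
under eq_bigr => Y _ do rewrite -big_seq.
rewrite -(exchange_big_fpowerset _ (fun M N => (-1) ^+ #|`N `\` M| * rho (A `|` N))).
under eq_bigr => N _ do rewrite -big_distrl /= sum_fpowerset_signD.
by rewrite sum_fpowerset_eq0 fsetU0.
Qed.

End Sums.
End FpowersetBig.

Section BoltzmannFactor.
Variables (R : realType) (X : countType).
Variables (z : X -> complex R) (W : {fset X} -> complex R).

Lemma kappa1E s T : kappa1 W s T = Wcond W [fset s] T.
Proof.
rewrite /kappa1 /kappa fpowerset1 big_mkcond /=.
rewrite big_fsetU1 /= ?big_seq_fset1 ?eqxx ?mul1r ?fset1_neq0 //.
by rewrite in_fset1 eq_sym fset1_neq0.
Qed.

Lemma kappa1_mem s B : s \in B -> kappa1 W s B = 0.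
Proof.
move=> sB; rewrite kappa1E /Wcond fsetI_eq0 fdisjoint1X sB /=.
by case: existsP => // -[]; exists [` fset11 s]; rewrite /= eqxx sB.
Qed.

Lemma kappa1_notin s T : s \notin T ->
  kappa1 W s T = \prod_(D <- fpowerset T) W (s |` D).
Proof. by move=> sT; rewrite kappa1E /Wcond fsetI_eq0 fdisjoint1X sT. Qed.

Lemma kappaU1 s T : s \notin T ->
  kappa W (s |` T) fset0 = kappa1 W s T * kappa W T fset0.
Proof.
move=> sT; rewrite kappa1_notin // /kappa big_mkcond big_fpowersetU1 //= -big_mkcond.
rewrite mulrC; congr (_ * _)%R; apply: eq_bigr => S _.
by rewrite fsetU1_neq0 /Wcond fsetI0 eqxx fpowerset0 big_seq_fset1 fsetU0.
Qed.

Lemma kappa0 : kappa W fset0 fset0 = 1.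
Proof. by rewrite /kappa fpowerset0 big_mkcond big_seq_fset1 eqxx. Qed.

Lemma sum_kappa1_fsetD1 s B A (F : {fset X} -> complex R) :
  \sum_(M <- fpowerset A) kappa1 W s (B `|` M) * F M =
  \sum_(M <- fpowerset (A `\ s)) kappa1 W s (B `|` M) * F M.
Proof.
apply/esym/big_fset_incl; first by rewrite fpowersetS fsubDset fsubsetUr.
move=> M MA; rewrite fpowersetCE -fpowersetE MA fdisjointX1 /= negbK => sM.
by rewrite kappa1_mem ?mul0r // inE sM orbT.
Qed.

Lemma zpowU1 s T : s \notin T -> zpow z (s |` T) = z s * zpow z T.
Proof. by move=> sT; rewrite /zpow big_fsetU1. Qed.

Lemma zpow0 : zpow z fset0 = 1.
Proof. by rewrite /zpow big_seq_fset0. Qed.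

End BoltzmannFactor.

Section Solution.
Variables (R : realType) (X : countType).
Variables (z : X -> complex R) (W : {fset X} -> complex R).
Variables (L : {fset X}) (rho : {fset X} -> complex R).
Hypothesis rho_eqn : forall (s : X) (T : {fset X}), s \notin T ->
  rho (s |` T) =
    \sum_(N <- fpowerset (L `\` T)) z s * gamma W s N T * rho (T `|` N).

Local Notation phi := (moebius L rho).

Lemma rho_fsetU1_moebius s T : s \notin T ->
  rho (s |` T) =
    z s * \sum_(M <- fpowerset (L `\` T)) kappa1 W s (T `|` M) * phi (T `|` M).
Proof.
move=> sT; rewrite rho_eqn // big_distrr /=.
under eq_bigr => N _ do rewrite /gamma big_distrr big_distrl /=.
rewrite (exchange_big_fpowerset _
  (fun M N => z s * ((-1) ^+ #|`N `\` M| * kappa1 W s (T `|` M)) * rho (T `|` N))).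
rewrite big_seq [RHS]big_seq; apply: eq_bigr => M MLT.
rewrite /moebius -fsetDDl !big_distrr big_seq [RHS]big_seq /=.
apply: eq_bigr => Y YLTM; rewrite (fsetUKD YLTM) fsetUA.
by rewrite mulrA -!mulrA; congr (_ * _)%R; rewrite mulrCA.
Qed.

Lemma moebius_fsetU1 s T : s \notin T -> phi (s |` T) = z s * kappa1 W s T * phi T.
Proof.
move=> sT; pose g U := kappa1 W s (T `|` U) * phi (T `|` U).
have sLsT : s \notin L `\` (s |` T) by rewrite !inE eqxx.
rewrite -mulrA (_ : kappa1 W s T * phi T = g fset0); last by rewrite /g fsetU0.
rewrite -(moebius_fpowerset (L `\` (s |` T)) g).
rewrite {1}/moebius big_distrr /= big_seq [RHS]big_seq; apply: eq_bigr => Y YLsT.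
have sY := notin_fpowerset sLsT YLsT.
rewrite -fsetUA rho_fsetU1_moebius; last by rewrite inE negb_or sT.
rewrite sum_kappa1_fsetD1 fsetDDl fsetDDl.
rewrite (_ : T `|` Y `|` [fset s] = (s |` T) `|` Y); last by rewrite fsetUC fsetUA.
rewrite mulrCA; congr (_ * (_ * _))%R; apply: eq_bigr => M _.
by rewrite /g fsetUA.
Qed.

Lemma moebius_factor U : phi U = zpow z U * kappa W U fset0 * phi fset0.
Proof.
elim/(@fset_ind X): U => [|a A aA IHA]; first by rewrite zpow0 kappa0 !mul1r.
rewrite moebius_fsetU1 // IHA zpowU1 // kappaU1 //.
by rewrite !mulrA; congr (_ * _)%R; rewrite -!mulrA; congr (_ * _)%R; rewrite mulrCA.
Qed.

Lemma rho_Zpart A : rho A = Zpart z W A L * phi fset0.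
Proof.
rewrite -(sum_moebius L rho A) /Zpart big_distrl /=.
by apply: eq_bigr => Y _; rewrite moebius_factor.
Qed.

End Solution.

Theorem proposition6p1 (R : realType) (X : countType)
  (z : X -> complex R) (W : {fset X} -> complex R)
  (L : {fset X}) (rho : {fset X} -> complex R) :
  (forall (s : X) (T : {fset X}), s \notin T ->
     rho (s |` T) =
       \sum_(N <- fpowerset (L `\` T)) z s * gamma W s N T * rho (T `|` N)) ->
  (exists c : complex R, forall A : {fset X}, rho A = Zpart z W A L * c) /\
  (rho fset0 != 0 ->
     Z0 z W L != 0 /\
     forall A : {fset X}, corr z W A L = rho A / rho fset0).
Proof.
move=> rho_eqn; have rhoE := @rho_Zpart _ _ z W L rho rho_eqn.
split; first by exists (moebius L rho fset0).
move=> rho0_neq0; rewrite /corr /Z0.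
have [Z0_neq0 c_neq0] : Zpart z W fset0 L != 0 /\ moebius L rho fset0 != 0.
  by apply/andP; rewrite -negb_or -mulf_eq0 -rhoE.
by split=> // A; rewrite rhoE (rhoE fset0) -mulf_div divff // mulr1.
Qed.
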